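(* Let $n\ge 1$ and $\tau\in\mathfrak S_n$, and write $\tau=\tau^a\,n\,\tau^b$ where $\tau^a$ and $\tau^b$ are the (possibly empty) factors before and after the entry $n$. Then $\tau\in\mathrm{Sort}_n(\mathrm{SC}_{\underline{12}3})$ if and only if all of the following hold: (1) every entry of $\tau^a$ is greater than every entry of $\tau^b$; (2) $\tau^a$ avoids the vincular pattern $3\underline{21}$ and the classical pattern $132$; (3) $\tau^b$ avoids the classical pattern $213$.
   Context: $\mathfrak S_n$ is the set of permutations of $\{1,\dots,n\}$. A vincular pattern is a permutation with some entries underlined; a sequence contains it if it has a subsequence with the same relative order in which entries corresponding to adjacent underlined entries occupy consecutive positions; classical patterns have no underlining. An occurrence of $\underline{12}3$ is $a_j a_{j+1} a_l$ with $l>j+1$ and $a_j<a_{j+1}<a_l$; an occurrence of $3\underline{21}$ is $a_i a_j a_{j+1}$ with $i<j$ and $a_{j+1}<a_j<a_i$. For a pattern $\sigma$, the map $\mathrm{SC}_\sigma$ acts on $\tau$: read entries left to right; when the next entry $x$ is read, if pushing $x$ yields a stack whose entries read top to bottom (stack adjacency = consecutive positions) avoid $\sigma$, push $x$; otherwise pop the top stack entry to the output and repeat. At the end pop all remaining entries; the output is $\mathrm{SC}_\sigma(\tau)$. West's stack-sorting map is $s=\mathrm{SC}_{21}$. $\mathrm{Sort}_n(\mathrm{SC}_\sigma)=\{\tau\in\mathfrak S_n : s(\mathrm{SC}_\sigma(\tau))=12\cdots n\}$. *)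

From mathcomp Require Import all_boot.
Set Implicit Arguments. Unset Strict Implicit. Unset Printing Implicit Defensive.

(* A (vincular) pattern is given by a word [p] (a permutation of 1..k, as a
   seq nat) and a predicate [adj] on positions: [adj i] means that entries
   i and i+1 of the pattern are underlined together, i.e. must occupy
   consecutive positions in an occurrence.  Classical patterns: adj = pred0. *)

Definition occurrence (p : seq nat) (adj : pred nat) (s : seq nat)
    (f : {ffun 'I_(size p) -> 'I_(size s)}) : bool :=
  [forall i : 'I_(size p), forall j : 'I_(size p),
     [&& (i < j) ==> (f i < f j),
         (nth 0 p i < nth 0 p j) == (nth 0 s (f i) < nth 0 s (f j)) &
         ((j == i.+1 :> nat) && adj i) ==> (f j == (f i).+1 :> nat)]].

Arguments occurrence : clear implicits.

Definition contains (p : seq nat) (adj : pred nat) (s : seq nat) : bool :=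
  [exists f, occurrence p adj s f].

Definition avoids p adj s := ~~ contains p adj s.

(* Push x onto the stack st (top = head of the list, stack read top to bottom
   is the list itself): while the pushed stack would contain the pattern,
   pop the top to the output. *)
Fixpoint push (cont : seq nat -> bool) (x : nat) (st out : seq nat)
    : seq nat * seq nat :=
  match st with
  | [::] => ([:: x], out)
  | y :: st' => if cont (x :: st) then push cont x st' (rcons out y)
                else (x :: st, out)
  end.

Definition SC (cont : seq nat -> bool) (tau : seq nat) : seq nat :=
  let: (st, out) := foldl (fun so x => push cont x so.1 so.2) ([::], [::]) tau in
  out ++ st.

Definition west_s (tau : seq nat) : seq nat := SC (contains [:: 2; 1] pred0) tau.

Definition SC_12_3 (tau : seq nat) : seq nat := SC (contains [:: 1; 2; 3] (pred1 0)) tau.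

Definition in_Sort_12_3 (n : nat) (tau : seq nat) : Prop :=
  perm_eq tau (iota 1 n) /\ west_s (SC_12_3 tau) = iota 1 n.

From mathcomp Require Import all_boot zify.
Set Implicit Arguments. Unset Strict Implicit. Unset Printing Implicit Defensive.

(** While tau^a is read, SC_{12_3} pops exactly when the incoming entry, the top of the stack
    and a deeper entry form a 12_3.  So the stack holds tau^a reversed until tau^a first
    contains 3_21, and every entry popped before n arrives is larger than some entry still on
    the stack.  The entry n is then pushed without popping, and above n the machine is the stack
    sort s' for the reversed order, since n completes every 12 on top into a 12_3.  Hence
    SC(tau) = o ++ s'(tau^b) ++ n :: st, where o is empty iff tau^a avoids 3_21, and then
    st = rev tau^a.

    By Knuth, s(sigma) is the identity iff sigma avoids 231.  If o is not empty, an entry of o,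
    then n, then a smaller entry of st form a 231.  Otherwise, splitting at the maximum n,
    s'(tau^b) n rev(tau^a) avoids 231 iff tau^b lies below tau^a, rev tau^a avoids 231 (tau^a
    avoids 132), and s'(tau^b) avoids 231.  As s'(tau^b) ends with its minimum, the last
    condition says that s'(tau^b) is decreasing, i.e. (Knuth for the reversed order) that
    tau^b avoids 213. *)

(** * Occurrences of short patterns *)

Definition same_order (a b x y : nat) := ((a < b) == (x < y)) && ((b < a) == (y < x)).

Lemma contains2P a b adj s :
  contains [:: a; b] adj s <->
  exists i j, [/\ i < j, j < size s, same_order a b (nth 0 s i) (nth 0 s j)
                & adj 0 ==> (j == i.+1)].
Proof.
split.
- case/existsP => f /forallP occ.
  have o0 : 0 < 2 by []. have o1 : 1 < 2 by [].
  move: (forallP (occ (Ordinal o0)) (Ordinal o1)) (forallP (occ (Ordinal o1)) (Ordinal o0)).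
  move=> /= /and3P[lt01 e01 adj01] /andP[e10 _].
  exists (f (Ordinal o0)), (f (Ordinal o1)).
  by rewrite lt01 ltn_ord /same_order e01 e10 adj01.
- case=> i [j [lt_ij lt_j /andP[e1 e2] adj_ij]].
  have lt_i : i < size s by apply: ltn_trans lt_j.
  apply/existsP; exists [ffun u : 'I_2 => nth (Ordinal lt_i) [:: Ordinal lt_i; Ordinal lt_j] u].
  apply/forallP => u; apply/forallP => v; rewrite !ffunE.
  by case: u => [[|[|u]] hu]; case: v => [[|[|v]] hv] //=;
     rewrite ?ltnn ?eqxx ?e1 ?e2 //= ?lt_ij.
Qed.

Lemma contains3P a b c adj s :
  contains [:: a; b; c] adj s <->
  exists i j k, [/\ i < j < k, k < size s,
    [&& same_order a b (nth 0 s i) (nth 0 s j), same_order a c (nth 0 s i) (nth 0 s k)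
      & same_order b c (nth 0 s j) (nth 0 s k)],
    adj 0 ==> (j == i.+1) & adj 1 ==> (k == j.+1)].
Proof.
split.
- case/existsP => f /forallP occ.
  have o0 : 0 < 3 by []. have o1 : 1 < 3 by []. have o2 : 2 < 3 by [].
  move: (forallP (occ (Ordinal o0)) (Ordinal o1)) (forallP (occ (Ordinal o1)) (Ordinal o0))
        (forallP (occ (Ordinal o0)) (Ordinal o2)) (forallP (occ (Ordinal o2)) (Ordinal o0))
        (forallP (occ (Ordinal o1)) (Ordinal o2)) (forallP (occ (Ordinal o2)) (Ordinal o1)).
  move=> /= /and3P[lt01 e01 adj01] /andP[e10 _] /and3P[_ e02 _] /andP[e20 _]
         /and3P[lt12 e12 adj12] /andP[e21 _].
  exists (f (Ordinal o0)), (f (Ordinal o1)), (f (Ordinal o2)).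
  by rewrite lt01 lt12 ltn_ord /same_order e01 e10 e02 e20 e12 e21 adj01 adj12.
- case=> i [j [k [/andP[lt_ij lt_jk] lt_k ord adj_ij adj_jk]]].
  case/and3P: ord => /andP[e1 e2] /andP[e3 e4] /andP[e5 e6].
  have lt_j : j < size s by apply: ltn_trans lt_k.
  have lt_i : i < size s by apply: ltn_trans lt_j.
  apply/existsP.
  exists [ffun u : 'I_3 => nth (Ordinal lt_i) [:: Ordinal lt_i; Ordinal lt_j; Ordinal lt_k] u].
  apply/forallP => u; apply/forallP => v; rewrite !ffunE.
  by case: u => [[|[|[|u]]] hu]; case: v => [[|[|[|v]]] hv] //=;
     rewrite ?ltnn ?eqxx ?e1 ?e2 ?e3 ?e4 ?e5 ?e6 //= ?lt_ij ?lt_jk ?(ltn_trans lt_ij lt_jk).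
Qed.

Fixpoint has2 (Q : rel nat) (s : seq nat) : bool :=
  if s is x :: s' then has (Q x) s' || has2 Q s' else false.

Fixpoint has3 (P : nat -> nat -> nat -> bool) (s : seq nat) : bool :=
  if s is x :: s' then has2 (P x) s' || has3 P s' else false.

Lemma has2P (Q : rel nat) s :
  reflect (exists i j, [/\ i < j, j < size s & Q (nth 0 s i) (nth 0 s j)]) (has2 Q s).
Proof.
elim: s => [|x s IH] /=; first by constructor=> -[i [j []]]; lia.
apply: (iffP orP) => [[/hasP[_ /(nthP 0)[j lt_j <-] q] | /IH[i [j [lt_ij lt_j q]]]] |].
- by exists 0, j.+1.
- by exists i.+1, j.+1.
- case=> [[|i]] [[|j] [lt_ij lt_j q]] //.
  + by left; apply/hasP; exists (nth 0 s j); rewrite ?mem_nth.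
  + by right; apply/IH; exists i, j.
Qed.

Lemma has3P (P : nat -> nat -> nat -> bool) s :
  reflect (exists i j k, [/\ i < j < k, k < size s & P (nth 0 s i) (nth 0 s j) (nth 0 s k)])
          (has3 P s).
Proof.
elim: s => [|x s IH] /=; first by constructor=> -[i [j [k []]]]; lia.
apply: (iffP orP) => [[/has2P[j [k [lt_jk lt_k q]]] | /IH[i [j [k [lt_ijk lt_k q]]]]] |].
- by exists 0, j.+1, k.+1.
- by exists i.+1, j.+1, k.+1.
- case=> [[|i]] [[|j] [[|k] [/andP[lt_ij lt_jk] lt_k q]]] //.
  + by left; apply/has2P; exists j, k.
  + by right; apply/IH; exists i, j, k; split=> //; apply/andP.
Qed.

Lemma has2_cat Q s1 s2 :
  has2 Q (s1 ++ s2) = [|| has2 Q s1, has2 Q s2 | has (fun x => has (Q x) s2) s1].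
Proof.
elim: s1 => [|x s1 IH] /=; first by rewrite orbF.
by rewrite has_cat IH; case: (has (Q x) s1); case: (has (Q x) s2); rewrite /= ?orbT.
Qed.

Lemma has2_mem Q s : has2 Q s -> exists x y, [/\ x \in s, y \in s & Q x y].
Proof.
case/has2P=> i [j [lt_ij lt_j q]]; exists (nth 0 s i), (nth 0 s j).
by rewrite !mem_nth //; apply: ltn_trans lt_j.
Qed.

Lemma has3_cat P s1 s2 :
  has3 P (s1 ++ s2) = [|| has3 P s1, has3 P s2, has (fun x => has2 (P x) s2) s1
                        | has2 (fun x y => has (P x y) s2) s1].
Proof.
elim: s1 => [|x s1 IH] /=; first by case: (has3 P s2).
by rewrite has2_cat IH; case: (has2 (P x) s1); case: (has2 (P x) s2);
   case: (has (fun y => has (P x y) s2) s1); rewrite /= ?orbT.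
Qed.

Lemma has3_cat3 (P : nat -> nat -> nat -> bool) s1 s2 s3 x y z :
  x \in s1 -> y \in s2 -> z \in s3 -> P x y z -> has3 P (s1 ++ s2 ++ s3).
Proof.
move=> x_s1 y_s2 z_s3 Pxyz; rewrite has3_cat; apply/or4P; apply: Or43.
apply/hasP; exists x => //; rewrite has2_cat; apply/or3P; apply: Or33.
by apply/hasP; exists y => //; apply/hasP; exists z.
Qed.

Lemma has3_rev P s : has3 P (rev s) = has3 (fun x y z => P z y x) s.
Proof.
suff rev_has3 t Q : has3 Q t -> has3 (fun x y z => Q z y x) (rev t).
  by apply/idP/idP => /rev_has3 //; rewrite revK.
case/has3P=> i [j [k [/andP[lt_ij lt_jk] lt_k q]]]; apply/has3P.
have revK_idx u : u < size t -> size t - (size t - u.+1).+1 = u by lia.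
exists (size t - k.+1), (size t - j.+1), (size t - i.+1).
by rewrite size_rev !nth_rev ?revK_idx; try lia; split=> //; lia.
Qed.

Definition pat231 (lt : rel nat) x y z := lt z x && lt x y.

Notation contains_21 := (contains [:: 2; 1] pred0).
Notation contains_12_3 := (contains [:: 1; 2; 3] (pred1 0)).
Notation contains_3_21 := (contains [:: 3; 2; 1] (pred1 1)).

Lemma contains_21E s : contains_21 s = has2 (fun x y => y < x) s.
Proof.
apply/idP/has2P => [/contains2P|] [i [j [lt_ij lt_j]]]; rewrite /same_order.
  by exists i, j; split=> //; lia.
by move=> lt_ji; apply/contains2P; exists i, j; split=> //; rewrite /same_order; lia.
Qed.

Lemma contains_132E s : contains [:: 1; 3; 2] pred0 s = has3 (fun x y z => x < z < y) s.
Proof.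
apply/idP/has3P => [/contains3P|] [i [j [k [lt_ijk lt_k]]]]; rewrite /same_order.
  by exists i, j, k; split=> //; lia.
by move=> ord; apply/contains3P; exists i, j, k; split=> //; rewrite /same_order; lia.
Qed.

Lemma contains_213E s : contains [:: 2; 1; 3] pred0 s = has3 (pat231 gtn) s.
Proof.
apply/idP/has3P => [/contains3P|] [i [j [k [lt_ijk lt_k]]]]; rewrite /pat231 /same_order /=.
  by exists i, j, k; split=> //; lia.
by move=> ord; apply/contains3P; exists i, j, k; split=> //; rewrite /same_order; lia.
Qed.

Lemma contains_12_3P s :
  reflect (exists i k, [/\ i.+1 < k, k < size s, nth 0 s i < nth 0 s i.+1
                          & nth 0 s i.+1 < nth 0 s k])
          (contains_12_3 s).
Proof.
apply: (iffP idP) => [/contains3P[i [j [k [lt_ijk lt_k ord /= /eqP Ej _]]]] |].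
  by subst j; exists i, k; move: ord; rewrite /same_order; split=> //; lia.
case=> i [k [lt_ik lt_k ord1 ord2]]; apply/contains3P; exists i, i.+1, k.
by rewrite eqxx /same_order; split=> //; lia.
Qed.

Lemma contains_3_21P s :
  reflect (exists i j, [/\ i < j, j.+1 < size s, nth 0 s j.+1 < nth 0 s j
                          & nth 0 s j < nth 0 s i])
          (contains_3_21 s).
Proof.
apply: (iffP idP) => [/contains3P[i [j [k [lt_ijk lt_k ord _ /= /eqP Ek]]]] |].
  by subst k; exists i, j; move: ord; rewrite /same_order; split=> //; lia.
case=> i [j [lt_ij lt_j ord1 ord2]]; apply/contains3P; exists i, j, j.+1.
by rewrite eqxx /same_order; split=> //; lia.
Qed.

Lemma contains_12_3_small s : size s <= 2 -> contains_12_3 s = false.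
Proof. by move=> small; apply/contains_12_3P => -[i [k [? ? _ _]]]; lia. Qed.

Lemma contains_12_3_cons x y s :
  contains_12_3 (x :: y :: s) = (x < y) && has (fun z => y < z) s || contains_12_3 (y :: s).
Proof.
apply/contains_12_3P/orP => [[[|i] [[|[|k]] [lt_ik lt_k ord1 ord2]]] //= |].
- by left; rewrite ord1; apply/hasP; exists (nth 0 s k); rewrite ?mem_nth.
- by right; apply/contains_12_3P; exists i, k.+1.
case=> [/andP[lt_xy /hasP[z /(nthP 0)[k lt_k <-] lt_yz]] | /contains_12_3P[i [k [? ? ? ?]]]].
  by exists 0, k.+2.
by exists i.+1, k.+1.
Qed.

Lemma contains_3_21_rev s : contains_3_21 s = contains_12_3 (rev s).
Proof.
have nth_rev_sub u : u < size s -> nth 0 (rev s) (size s - u.+1) = nth 0 s u.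
  by move=> lt_u; rewrite nth_rev; [congr nth; lia | lia].
apply/contains_3_21P/contains_12_3P => [[i [j [lt_ij lt_j ord1 ord2]]] |
                                       [i [k [lt_ik]]]]; rewrite size_rev.
  exists (size s - j.+2), (size s - i.+1).
  have -> : (size s - j.+2).+1 = size s - j.+1 by lia.
  by rewrite !nth_rev_sub; try lia; split=> //; lia.
move=> lt_k; rewrite !nth_rev; try lia; move=> ord1 ord2.
exists (size s - k.+1), (size s - i.+2).
have -> : (size s - i.+2).+1 = size s - i.+1 by lia.
by split; try lia.
Qed.

Lemma perm_allrel (T : eqType) (r : rel T) s1 s1' s2 s2' :
  perm_eq s1 s1' -> perm_eq s2 s2' -> allrel r s1 s2 = allrel r s1' s2'.
Proof.
by move=> perm1 perm2; rewrite /allrel (perm_all _ perm1); apply: eq_all => x; apply: perm_all.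
Qed.

(** * The stack machine SC *)

Section Stack.
Variable cont : seq nat -> bool.

Definition run (xs : seq nat) (so : seq nat * seq nat) : seq nat * seq nat :=
  foldl (fun so x => push cont x so.1 so.2) so xs.

Lemma SC_run tau : SC cont tau = (run tau ([::], [::])).2 ++ (run tau ([::], [::])).1.
Proof. by rewrite /SC /run; case: foldl. Qed.

Lemma run_cat xs ys so : run (xs ++ ys) so = run ys (run xs so).
Proof. exact: foldl_cat. Qed.

Lemma run_rcons xs x so : run (rcons xs x) so = push cont x (run xs so).1 (run xs so).2.
Proof. exact: foldl_rcons. Qed.

Lemma push_out x st o :
  push cont x st o = ((push cont x st [::]).1, o ++ (push cont x st [::]).2).
Proof.
elim: st o => [|y st IH] o /=; first by rewrite cats0.
case: ifP => _ /=; last by rewrite cats0.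
by rewrite IH [in RHS]IH /= cat_rcons.
Qed.

Lemma run_out xs st o :
  run xs (st, o) = ((run xs (st, [::])).1, o ++ (run xs (st, [::])).2).
Proof.
elim: xs st o => [|x xs IH] st o /=; first by rewrite cats0.
rewrite /run /= -!/(run _ _) push_out.
by case: (push cont x st [::]) => st1 o1; rewrite IH [in RHS]IH /= catA.
Qed.

Lemma push_perm x st o :
  perm_eq ((push cont x st o).2 ++ (push cont x st o).1) (o ++ x :: st).
Proof.
elim: st o => [|y st IH] o //=; case: ifP => //= _.
by apply: perm_trans (IH _) _; rewrite -cats1 -!catA perm_cat2l (perm_catCA [:: y] [:: x]).
Qed.

Lemma run_perm xs so :
  perm_eq ((run xs so).2 ++ (run xs so).1) (so.2 ++ so.1 ++ xs).
Proof.
elim: xs so => [|x xs IH] [st o] /=; first by rewrite cats0.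
apply: perm_trans (IH _) _; rewrite catA.
apply: perm_trans (_ : perm_eq _ ((o ++ x :: st) ++ xs)) _; first by rewrite perm_cat2r push_perm.
by rewrite -!catA perm_cat2l (perm_catCA [:: x] st xs).
Qed.

Lemma SC_perm tau : perm_eq (SC cont tau) tau.
Proof. by rewrite SC_run; apply: perm_trans (run_perm _ _) _. Qed.

Lemma mem_run xs : {subset (run xs ([::], [::])).2 ++ (run xs ([::], [::])).1 <= xs}.
Proof. by move=> z; rewrite (perm_mem (run_perm xs _)). Qed.

Lemma mem_push x st o z : z \in (push cont x st o).1 -> z \in x :: st.
Proof.
rewrite push_out /= => z_st.
by have := perm_mem (push_perm x st [::]) z; rewrite mem_cat z_st orbT /= => <-.
Qed.

Lemma mem_push_top x st o : x \in (push cont x st o).1.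
Proof.
by elim: st o => [|y st IH] o /=; [rewrite mem_head | case: ifP => _; rewrite ?mem_head].
Qed.

Hypothesis cont_single : forall x, ~~ cont [:: x].

Lemma push_avoid x st o : ~~ cont (push cont x st o).1.
Proof. by elim: st o => [|y st IH] o //=; case: ifP => //= ->. Qed.

Lemma run_avoid xs so : ~~ cont so.1 -> ~~ cont (run xs so).1.
Proof.
by elim: xs so => [|x xs IH] [st o] // _; apply: IH; apply: push_avoid.
Qed.

End Stack.

(** * Stack sorting and Knuth's theorem *)

Section StackSort.
Variable lt : rel nat.

Definition top_inversion (st : seq nat) : bool :=
  if st is x :: y :: _ then lt y x else false.

Definition stack_sort : seq nat -> seq nat := SC top_inversion.

Lemma stack_sort_perm s : perm_eq (stack_sort s) s.
Proof. exact: SC_perm. Qed.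

Lemma push_inversion_max m st o :
  all (lt^~ m) st -> push top_inversion m st o = ([:: m], o ++ st).
Proof.
elim: st o => [|y st IH] o /=; first by rewrite cats0.
by case/andP=> -> /IH->; rewrite cat_rcons.
Qed.

Lemma push_inversion_below x S b B o : ~~ lt b x ->
  push top_inversion x (S ++ b :: B) o =
    ((push top_inversion x S o).1 ++ b :: B, (push top_inversion x S o).2).
Proof.
move=> /negbTE b_x; elim: S o => [|y S IH] o /=; first by rewrite b_x.
by case: ifP => _ //; rewrite IH.
Qed.

Lemma run_inversion_below xs S b B o : all (fun x => ~~ lt b x) xs ->
  run top_inversion xs (S ++ b :: B, o) =
    ((run top_inversion xs (S, o)).1 ++ b :: B, (run top_inversion xs (S, o)).2).
Proof.
elim: xs S o => [|x xs IH] S o //= /andP[b_x b_xs].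
by rewrite /run /= -!/(run _ _ _) push_inversion_below //; case: push => S' o'; apply: IH.
Qed.

Hypothesis lt_irr : irreflexive lt.
Hypothesis lt_trans : transitive lt.

Lemma lt_asym x y : lt x y -> ~~ lt y x.
Proof. by move=> lt_xy; apply/negP => /(lt_trans lt_xy); rewrite lt_irr. Qed.

Lemma stack_sort_cat_max L m R : all (lt^~ m) (L ++ R) ->
  stack_sort (L ++ m :: R) = stack_sort L ++ stack_sort R ++ [:: m].
Proof.
rewrite all_cat => /andP[L_m R_m].
rewrite /stack_sort !SC_run run_cat.
case E: (run top_inversion L _) => [stL oL] /=.
have stL_m : all (lt^~ m) stL.
  apply/allP=> y y_st; apply: (allP L_m).
  by have := @mem_run top_inversion L y; rewrite E mem_cat y_st orbT; apply.
rewrite /run /= -/(run _ _ _) push_inversion_max // -[[:: m]]cat0s run_inversion_below.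
  by rewrite run_out /= -!catA.
by apply/allP=> x /(allP R_m)/lt_asym.
Qed.

Hypothesis lt_total : forall x y, x != y -> lt x y || lt y x.

Lemma max_decomposition (s : seq nat) : uniq s -> s != [::] ->
  exists L m R, s = L ++ m :: R /\ all (lt^~ m) (L ++ R).
Proof.
elim: s => [|x s IH] //= /andP[x_s uniq_s] _.
case: s IH x_s uniq_s => [|y s] IH x_s uniq_s; first by exists [::], x, [::].
have [L [m [R [sE LR_m]]]] := IH uniq_s isT.
have [x_m | m_x] := boolP (lt x m); first by exists (x :: L), m, R; rewrite sE /= x_m.
have {}m_x : lt m x.
  have x_neq_m : x != m.
    by apply/negP => /eqP xm; move: x_s; rewrite xm sE mem_cat mem_head orbT.
  by move: (lt_total x_neq_m); rewrite (negbTE m_x).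
exists [::], x, (y :: s); split=> //; rewrite cat0s sE all_cat /= m_x /= -all_cat.
by apply: sub_all LR_m => z /lt_trans; apply.
Qed.

Lemma has3_pat231_cat_max L m R : all (lt^~ m) (L ++ R) ->
  has3 (pat231 lt) (L ++ m :: R) =
    [|| has3 (pat231 lt) L, has3 (pat231 lt) R | has (fun x => has (lt^~ x) R) L].
Proof.
rewrite all_cat => /andP[/allP L_m /allP R_m].
have m_R y : y \in R -> lt m y = false by move/R_m/lt_asym/negbTE.
have no_m2 : has2 (pat231 lt m) R = false.
  by apply/negP => /has2_mem[y [z [y_R _ /andP[_]]]]; rewrite m_R.
rewrite has3_cat /= no_m2 /=.
set inv := has (fun x => has (lt^~ x) R) L.
have -> : has (fun x => has (pat231 lt x m) R || has2 (pat231 lt x) R) L = inv.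
  apply: eq_in_has => x /L_m x_m /=.
  have -> : has (pat231 lt x m) R = has (lt^~ x) R.
    by apply: eq_has => z; rewrite /pat231 x_m andbT.
  apply/orP/idP => [[//|/has2_mem[_ [z [_ z_R /andP[z_x _]]]]] |]; last by left.
  by apply/hasP; exists z.
have inv_mid : has2 (fun x y => pat231 lt x y m || has (pat231 lt x y) R) L -> inv.
  case/has2_mem=> x [_ [x_L _ /orP[/andP[m_x _] | /hasP[z z_R /andP[z_x _]]]]].
    by have := lt_asym (L_m x x_L); rewrite m_x.
  by apply/hasP; exists x => //; apply/hasP; exists z.
case: inv inv_mid => [_ | inv_mid]; first by rewrite !orbT.
by rewrite (contraFF inv_mid erefl) /= !orbF.
Qed.

Lemma allrel_total L R : uniq (L ++ R) -> allrel lt L R = ~~ has (fun x => has (lt^~ x) R) L.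
Proof.
rewrite cat_uniq => /and3P[_ disj _].
rewrite /allrel -all_predC; apply: eq_in_all => x x_L /=; rewrite -all_predC.
apply: eq_in_all => z z_R /=; have x_neq_z : x != z.
  by apply: contraNneq disj => xz; apply/hasP; exists z; rewrite // -xz.
by case/orP: (lt_total x_neq_z) => lt_xz; rewrite lt_xz ?(negbTE (lt_asym lt_xz)).
Qed.

Lemma avoid231_cat_max L m R : uniq (L ++ m :: R) -> all (lt^~ m) (L ++ R) ->
  ~~ has3 (pat231 lt) (L ++ m :: R) =
    [&& ~~ has3 (pat231 lt) L, ~~ has3 (pat231 lt) R & allrel lt L R].
Proof.
move=> uniq_LmR LR_m; rewrite has3_pat231_cat_max // !negb_or allrel_total //.
by move: uniq_LmR; rewrite -cat1s uniq_catCA => /andP[].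
Qed.

Theorem pairwise_stack_sort (s : seq nat) :
  uniq s -> pairwise lt (stack_sort s) = ~~ has3 (pat231 lt) s.
Proof.
have [N] := ubnP (size s); elim: N s => // N IH s size_s uniq_s.
have [-> // | s_nil] := eqVneq s [::].
have [L [m [R [sE LR_m]]]] := max_decomposition uniq_s s_nil.
move: uniq_s size_s; rewrite sE size_cat /= => uniq_s size_s.
have [uniq_L uniq_R] : uniq L /\ uniq R.
  by move: uniq_s; rewrite cat_uniq /= => /and3P[-> _ /andP[_ ->]].
have perm_L := stack_sort_perm L; have perm_R := stack_sort_perm R.
rewrite stack_sort_cat_max // avoid231_cat_max // -!IH //; try lia.
rewrite !pairwise_cat allrel_catr !allrel1r (perm_allrel _ perm_L perm_R) (perm_all _ perm_L).
move: LR_m; rewrite all_cat (perm_all _ perm_R) => /andP[-> ->] /=.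
by rewrite !andbT andbC -andbA.
Qed.

End StackSort.

Lemma contains_21_cons x y s :
  ~~ contains_21 (y :: s) -> contains_21 (x :: y :: s) = (y < x).
Proof.
rewrite !contains_21E /= => /norP[s_ge_y no_s]; rewrite (negbTE s_ge_y) (negbTE no_s) !orbF.
apply/orP/idP => [[// | /hasP[z z_s z_x]] | ->]; last by left.
by move/hasPn: s_ge_y => /(_ z z_s); lia.
Qed.

Lemma west_sE s : west_s s = stack_sort ltn s.
Proof.
rewrite /west_s /stack_sort !SC_run; set so := ([::], [::]).
have single_21 x : ~~ contains_21 [:: x] by rewrite contains_21E.
have : ~~ contains_21 so.1 by rewrite contains_21E.
elim: s so => [|x s IH] [st o] //= st_ok; rewrite /run /= -!/(run _ _ _).
have <- : push contains_21 x st o = push (top_inversion ltn) x st o.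
  elim: st o st_ok {IH} => [|y st IHst] o //= st_ok; rewrite contains_21_cons //.
  by case: ifP => // _; apply: IHst; move: st_ok; rewrite !contains_21E /= => /norP[].
by apply: IH; apply: push_avoid.
Qed.

(** * The machine SC_{12_3} *)

Notation run_12_3 a := (run contains_12_3 a ([::], [::])).

Lemma contains_12_3_single x : ~~ contains_12_3 [:: x].
Proof. by rewrite contains_12_3_small. Qed.

Lemma contains_12_3_consl x s : contains_12_3 s -> contains_12_3 (x :: s).
Proof.
case: s => [|y s] c123_s; last by rewrite contains_12_3_cons c123_s orbT.
by rewrite contains_12_3_small in c123_s.
Qed.

Lemma run_12_3_avoid a : ~~ contains_12_3 (run_12_3 a).1.
Proof. by apply: run_avoid contains_12_3_single _ _ _; rewrite contains_12_3_small. Qed.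

Lemma push_12_3_popped x st :
  ~~ contains_12_3 st -> all (fun y => x < y) (push contains_12_3 x st [::]).2.
Proof.
elim: st => [|y st IH] //= st_ok; case: ifP => //.
rewrite contains_12_3_cons (negbTE st_ok) orbF => /andP[x_y _].
by rewrite push_out /= x_y IH //; apply: contraNN st_ok; apply: contains_12_3_consl.
Qed.

Lemma run_12_3_popped a y :
  y \in (run_12_3 a).2 -> exists2 w, w \in (run_12_3 a).1 & w < y.
Proof.
elim/last_ind: a y => [|a x IH] y //; rewrite run_rcons.
have popped_gt := allP (push_12_3_popped x (run_12_3_avoid a)).
case: (run_12_3 a) IH popped_gt => st o /= IH popped_gt.
have x_top := mem_push_top contains_12_3 x st [::].
rewrite push_out /= mem_cat => /orP[/IH[w w_st w_y] | /popped_gt]; last by exists x.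
have := perm_mem (push_perm contains_12_3 x st [::]) w; rewrite /= in_cons w_st orbT mem_cat.
case/orP=> [/popped_gt x_w | w_top]; last by exists w.
by exists x => //; apply: ltn_trans w_y.
Qed.

Lemma run_12_3_rev a : ~~ contains_12_3 (rev a) -> run_12_3 a = (rev a, [::]).
Proof.
elim/last_ind: a => [|a x IH] //; rewrite rev_rcons => no123.
rewrite run_rcons IH /=; last by apply: contraNN no123; apply: contains_12_3_consl.
by case: (rev a) no123 => [|y s] //= /negbTE->.
Qed.

Lemma run_12_3_pops a : contains_12_3 (rev a) -> (run_12_3 a).2 != [::].
Proof.
elim/last_ind: a => [|a x IH]; first by rewrite contains_12_3_small.
rewrite rev_rcons run_rcons push_out /=.
have [/IH | no123] := boolP (contains_12_3 (rev a)); first by case: (run_12_3 a).2.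
rewrite run_12_3_rev //=; case: (rev a) => [|y s]; first by rewrite contains_12_3_small.
by move=> /= ->; rewrite push_out.
Qed.

Lemma push_12_3_above n x S B o :
  ~~ contains_12_3 (S ++ n :: B) -> all (fun y => y < n) (S ++ B) -> x < n ->
  push contains_12_3 x (S ++ n :: B) o =
    ((push (top_inversion gtn) x S o).1 ++ n :: B, (push (top_inversion gtn) x S o).2).
Proof.
elim: S o => [|y S IH] o /= no123 below x_n.
  rewrite contains_12_3_cons (negbTE no123) orbF x_n /=.
  by have -> : has (fun z => n < z) B = false by apply/hasPn => z /(allP below); lia.
case/andP: below => y_n below; rewrite contains_12_3_cons (negbTE no123) orbF.
have -> : has (fun z => y < z) (S ++ n :: B).
  by apply/hasP; exists n; rewrite // mem_cat mem_head orbT.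
rewrite andbT; case: ifP => // _.
by apply: IH => //; apply: contraNN no123; apply: contains_12_3_consl.
Qed.

Lemma run_12_3_above n xs S B o :
  ~~ contains_12_3 (S ++ n :: B) -> all (fun y => y < n) (S ++ B) ->
  all (fun y => y < n) xs ->
  run contains_12_3 xs (S ++ n :: B, o) =
    ((run (top_inversion gtn) xs (S, o)).1 ++ n :: B, (run (top_inversion gtn) xs (S, o)).2).
Proof.
elim: xs S o => [|x xs IH] S o //= no123 below /andP[x_n xs_n].
have no123' := push_avoid contains_12_3_single x (S ++ n :: B) o.
rewrite /run /= -!/(run _ _ _) push_12_3_above // in no123' *.
have := @mem_push (top_inversion gtn) x S o.
case: push no123' => S' o' /= no123' S'_sub; apply: IH => //.
apply/allP=> z; rewrite mem_cat => /orP[/S'_sub | z_B].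
  by rewrite in_cons => /orP[/eqP-> // | z_S]; apply: (allP below); rewrite mem_cat z_S.
by apply: (allP below); rewrite mem_cat z_B orbT.
Qed.

Lemma SC_12_3_cat_max a n b : all (fun y => y < n) (a ++ b) ->
  SC_12_3 (a ++ n :: b) = (run_12_3 a).2 ++ stack_sort gtn b ++ n :: (run_12_3 a).1.
Proof.
rewrite all_cat => /andP[a_n b_n].
have st_ok := run_12_3_avoid a.
have st_n : all (fun y => y < n) (run_12_3 a).1.
  apply/allP=> y y_st; apply: (allP a_n).
  by have := @mem_run contains_12_3 a y; rewrite mem_cat y_st orbT; apply.
rewrite /SC_12_3 SC_run run_cat; case: (run_12_3 a) st_ok st_n => st o /= st_ok st_n.
have n_st_ok : ~~ contains_12_3 (n :: st).
  case: st st_ok st_n => [|y st] st_ok; first by rewrite contains_12_3_small.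
  by case/andP=> y_n _; rewrite contains_12_3_cons (negbTE st_ok) orbF ltnNge (ltnW y_n).
have -> : push contains_12_3 n st o = ([::] ++ n :: st, o).
  by case: st n_st_ok {st_ok st_n} => //= y st /negbTE->.
by rewrite run_12_3_above ?cats0 // run_out /stack_sort SC_run /= -!catA.
Qed.

Lemma in_Sort_12_3E n tau :
  perm_eq tau (iota 1 n) -> in_Sort_12_3 n tau <-> ~~ has3 (pat231 ltn) (SC_12_3 tau).
Proof.
move=> perm_tau; have perm_SC := perm_trans (SC_perm contains_12_3 tau) perm_tau.
have ltn_total x y : x != y -> (x < y) || (y < x) by rewrite neq_ltn.
have ltn_anti : antisymmetric ltn by move=> x y /andP[/ltn_trans lt_xy /lt_xy]; rewrite ltnn.
have iota_incr : pairwise ltn (iota 1 n) by rewrite -(sorted_pairwise ltn_trans) iota_ltn_sorted.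
rewrite /in_Sort_12_3 west_sE -(pairwise_stack_sort ltnn ltn_trans ltn_total); last first.
  by rewrite (perm_uniq perm_SC) iota_uniq.
split=> [[_ ->] // | incr]; split=> //; apply: (pairwise_eq ltn_anti incr iota_incr).
exact: perm_trans (SC_perm _ _) perm_SC.
Qed.

Lemma decreasing_pat231 s : pairwise gtn s -> ~~ has3 (pat231 ltn) s.
Proof.
move/(pairwiseP 0)=> decr; apply/has3P => -[i [j [k [/andP[lt_ij lt_jk] lt_k /andP[_]]]]].
move=> /= lt_s; have := decr i j; rewrite !inE /=; lia.
Qed.

Lemma avoid231_rcons_min (X : seq nat) (m : nat) :
  uniq (rcons X m) -> all (fun x => m < x) X ->
  ~~ has3 (pat231 ltn) (rcons X m) = pairwise gtn (rcons X m).
Proof.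
rewrite rcons_uniq => /andP[_ uniq_X] m_X; apply/idP/idP => [no231 | /decreasing_pat231 //].
apply/(pairwiseP 0) => i j; rewrite !inE /= size_rcons => lt_i lt_j lt_ij.
have lt_iX : i < size X by lia.
have [j_last | j_not_last] := eqVneq j (size X).
  by rewrite j_last !nth_rcons lt_iX ltnn eqxx; apply: (allP m_X); apply: mem_nth.
have lt_jX : j < size X by lia.
rewrite !nth_rcons lt_iX lt_jX ltnNge leq_eqVlt nth_uniq // (ltn_eqF lt_ij) /=.
apply/negP => lt_Xij; move/has3P: no231; apply; exists i, j, (size X).
rewrite size_rcons !nth_rcons lt_iX lt_jX ltnn eqxx /pat231 /= lt_Xij.
by rewrite (allP m_X) ?mem_nth ?lt_ij.
Qed.


Lemma avoid231_stack_sort_gtn b :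
  uniq b -> ~~ has3 (pat231 ltn) (stack_sort gtn b) = ~~ contains [:: 2; 1; 3] pred0 b.
Proof.
move=> uniq_b.
have gtn_trans : transitive gtn by move=> y x z /= lt_yx lt_zy; apply: ltn_trans lt_zy lt_yx.
have gtn_total x y : x != y -> gtn x y || gtn y x by rewrite /= neq_ltn orbC.
rewrite contains_213E -(pairwise_stack_sort ltnn gtn_trans gtn_total uniq_b).
have [-> // | b_nil] := eqVneq b [::].
have uniq_S : uniq (stack_sort gtn b) by rewrite (perm_uniq (stack_sort_perm _ b)).
have [L [m [R [bE LR_m]]]] := max_decomposition gtn_trans gtn_total uniq_b b_nil.
move: uniq_S; rewrite bE (stack_sort_cat_max ltnn gtn_trans) // catA cats1 => uniq_S.
rewrite avoid231_rcons_min //.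
by rewrite (perm_all _ (perm_cat (stack_sort_perm _ L) (stack_sort_perm _ R))).
Qed.

Lemma SC_12_3_has231 a n b : all (fun y => y < n) (a ++ b) -> contains_3_21 a ->
  has3 (pat231 ltn) (SC_12_3 (a ++ n :: b)).
Proof.
rewrite all_cat => /andP[a_n b_n]; rewrite contains_3_21_rev => /run_12_3_pops.
rewrite SC_12_3_cat_max ?all_cat ?a_n //.
have := @run_12_3_popped a; have := @mem_run contains_12_3 a.
case: (run_12_3 a) => st [|y o] /= sub_a popped _ //.
have [w w_st w_y] := popped y (mem_head y o).
have y_n : y < n by apply/(allP a_n)/sub_a; rewrite mem_head.
have -> : stack_sort gtn b ++ n :: st = (stack_sort gtn b ++ [:: n]) ++ st by rewrite -catA.
apply: (has3_cat3 (y := n) (mem_head y o) _ w_st); first by rewrite mem_cat mem_head orbT.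
by apply/andP.
Qed.

Lemma avoid231_SC_12_3 (a : seq nat) (n : nat) (b : seq nat) :
  uniq (a ++ n :: b) -> all (fun y => y < n) (a ++ b) -> ~~ contains_3_21 a ->
  ~~ has3 (pat231 ltn) (SC_12_3 (a ++ n :: b)) =
    [&& all (fun x => all (fun y => y < x) b) a, ~~ contains [:: 1; 3; 2] pred0 a
      & ~~ contains [:: 2; 1; 3] pred0 b].
Proof.
move=> uniq_anb below; rewrite contains_3_21_rev => no321.
have perm_S : perm_eq (stack_sort gtn b ++ n :: rev a) (a ++ n :: b).
  apply/permP => p; rewrite !count_cat /= count_rev (permP (stack_sort_perm _ b)).
  by rewrite addnC addnCA addnA.
have uniq_S : uniq (stack_sort gtn b ++ n :: rev a) by rewrite (perm_uniq perm_S).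
have below_S : all (ltn^~ n) (stack_sort gtn b ++ rev a).
  by rewrite all_cat (perm_all _ (stack_sort_perm _ b)) all_rev andbC -all_cat.
have uniq_b : uniq b by move: uniq_anb; rewrite cat_uniq /= => /and4P[_ _ _].
rewrite SC_12_3_cat_max // run_12_3_rev //=.
have ltn_total x y : x != y -> (x < y) || (y < x) by rewrite neq_ltn.
rewrite (avoid231_cat_max ltnn ltn_trans ltn_total) //.
rewrite avoid231_stack_sort_gtn // has3_rev -contains_132E.
rewrite (perm_allrel _ (stack_sort_perm _ b) (perm_refl _)) allrel_revr allrelC.
by rewrite andbC andbAC andbC.
Qed.

Lemma perm_iota_cat_max n (a b : seq nat) : perm_eq (a ++ n :: b) (iota 1 n) ->
  uniq (a ++ n :: b) /\ all (fun y => y < n) (a ++ b).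
Proof.
move=> perm_anb; have uniq_anb : uniq (a ++ n :: b) by rewrite (perm_uniq perm_anb) iota_uniq.
split=> //; apply/allP=> y y_ab.
have y_neq_n : y != n.
  by apply: contraTneq y_ab => ->; move: uniq_anb; rewrite -cat1s uniq_catCA => /andP[].
have : y \in a ++ n :: b by rewrite mem_cat inE orbCA -mem_cat y_ab orbT.
by rewrite (perm_mem perm_anb) mem_iota => /andP[_]; rewrite ltnS leq_eqVlt (negbTE y_neq_n).
Qed.

Theorem mainTheorem12 (n : nat) (tau a b : seq nat) :
  0 < n -> perm_eq tau (iota 1 n) -> tau = a ++ n :: b ->
  (in_Sort_12_3 n tau <->
   [/\ all (fun x => all (fun y => y < x) b) a,
       avoids [:: 3; 2; 1] (pred1 1) a /\ avoids [:: 1; 3; 2] pred0 a &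
       avoids [:: 2; 1; 3] pred0 b]).
Proof.
move=> _ perm_anb tauE; subst tau; rewrite in_Sort_12_3E // /avoids.
have [uniq_anb below_n] := perm_iota_cat_max perm_anb.
have [c321 | no321] := boolP (contains_3_21 a).
  by split=> [/negP[] | [_ [/negP[]]]] //; apply: SC_12_3_has231.
by rewrite avoid231_SC_12_3 //; split=> [/and3P[-> -> ->] | [-> [_ ->] ->]].
Qed.
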